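(* Let $G$ be a group with finite generating set $S$. If $\textnormal{Geo}(G,S)$ is regular, then the geodesic skeleton subshift $X^g_{G,S}$ is sofic.
   Context: A word $w$ over $S\cup S^{-1}$ is geodesic if $|w|\le|v|$ for every word $v$ representing the same element of $G$; $\textnormal{Geo}(G,S)$ is the language of geodesic words. The skeleton subshift $X_{G,S}\subseteq(S\cup S^{-1})^{\mathbb{Z}}$ is the set of sequences none of whose non-empty finite factors represents $1_G$, and $X^g_{G,S}=\{x\in X_{G,S}\mid \text{every finite factor of }x\text{ is geodesic}\}$. A subshift over a finite alphabet is a set of bi-infinite sequences avoiding all words of a set $\mathcal F$ of forbidden finite words; it is sofic if $\mathcal F$ can be chosen to be a regular language. *)

From Stdlib Require Import ZArith List.
From mathcomp Require Import all_boot.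
Set Implicit Arguments. Unset Strict Implicit. Unset Printing Implicit Defensive.

Record group := Group {
  gcarrier :> Type;
  gmul : gcarrier -> gcarrier -> gcarrier;
  gone : gcarrier;
  ginv : gcarrier -> gcarrier;
  gmulA : forall x y z, gmul x (gmul y z) = gmul (gmul x y) z;
  gmul1 : forall x, gmul gone x = x;
  gmulV : forall x, gmul (ginv x) x = gone
}.

Section Defs.
Variable G : group.

Definition in_alph (S : list G) (g : G) : Prop :=
  exists a, List.In a S /\ (g = a \/ g = ginv a).

Definition word_over (S : list G) (w : list G) : Prop :=
  forall g, List.In g w -> in_alph S g.

Definition eval (w : list G) : G := foldr (@gmul G) (gone G) w.

Definition generates (S : list G) : Prop :=
  forall g : G, exists w, word_over S w /\ eval w = g.

Definition geodesic (S : list G) (w : list G) : Prop :=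
  word_over S w /\
  forall v, word_over S v -> eval v = eval w -> (size w <= size v)%N.

Definition regular (S : list G) (L : list G -> Prop) : Prop :=
  (forall w, L w -> word_over S w) /\
  exists (Q : finType) (q0 : Q) (delta : Q -> G -> Q) (acc : pred Q),
    forall w, word_over S w -> (L w <-> acc (foldl delta q0 w)).

Definition factor (x : Z -> G) (i : Z) (n : nat) : list G :=
  map (fun k => x (i + Z.of_nat k)%Z) (iota 0 n).

Definition seq_over (S : list G) (x : Z -> G) : Prop :=
  forall i, in_alph S (x i).

Definition skeleton (S : list G) (x : Z -> G) : Prop :=
  seq_over S x /\ forall i n, (0 < n)%N -> eval (factor x i n) <> gone G.

Definition geo_skeleton (S : list G) (x : Z -> G) : Prop :=
  skeleton S x /\ forall i n, geodesic S (factor x i n).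

Definition sofic (S : list G) (X : (Z -> G) -> Prop) : Prop :=
  exists F : list G -> Prop, regular S F /\
    forall x, X x <-> (seq_over S x /\ forall i n, ~ F (factor x i n)).

End Defs.

From Stdlib Require Import ZArith List.
From mathcomp Require Import all_boot.

Set Implicit Arguments.
Unset Strict Implicit.

(* The forbidden words are the non-geodesic ones: they form a regular language
   (swap accepting and rejecting states), and a non-empty geodesic word never
   represents the identity, so avoiding them already forces the skeleton
   condition. *)

Section GeodesicSkeleton.
Variables (G : group) (S : list G).

Lemma word_over_factor (x : Z -> G) i n :
  seq_over S x -> word_over S (factor x i n).
Proof.
move=> Sx g; rewrite /factor.
by elim: (iota 0 n) => [|k s IHs] //= [<-|gs]; [exact: Sx | exact: IHs].
Qed.

Lemma size_factor (x : Z -> G) i n : size (factor x i n) = n.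
Proof. by rewrite /factor size_map size_iota. Qed.

Lemma regularC (L : list G -> Prop) :
  regular S L -> regular S (fun w => word_over S w /\ ~ L w).
Proof.
move=> [_ [Q [q0 [delta [acc accP]]]]]; split; first by move=> w [].
exists Q, q0, delta, (predC acc) => w Sw /=.
by rewrite (accP w Sw); split=> [[_ /negP] | /negP].
Qed.

Lemma regular_decide (L : list G -> Prop) w :
  regular S L -> word_over S w -> L w \/ ~ L w.
Proof.
move=> [_ [Q [q0 [delta [acc accP]]]]] Sw; rewrite (accP w Sw).
by case: (acc _); [left | right].
Qed.

Lemma geodesic_eval_neq1 w :
  geodesic S w -> (0 < size w)%N -> eval w <> gone G.
Proof.
move=> [_ minw] w_gt0 w1.
have := minw [::] (fun g (g_nil : List.In g [::]) => match g_nil with end).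
by rewrite w1 leqn0 => /(_ erefl) /eqP w0; rewrite w0 in w_gt0.
Qed.

Lemma geo_skeletonE (x : Z -> G) :
  geo_skeleton S x <-> seq_over S x /\ forall i n, geodesic S (factor x i n).
Proof.
split=> [[[Sx _] geo_x] // | [Sx geo_x]]; split=> //; split=> // i n n_gt0.
by apply: geodesic_eval_neq1; rewrite ?size_factor.
Qed.

End GeodesicSkeleton.

Theorem proposition6 (G : group) (S : list G) :
  generates S ->
  regular S (geodesic S) ->
  sofic S (geo_skeleton S).
Proof.
move=> _ geo_reg.
exists (fun w => word_over S w /\ ~ geodesic S w); split; first exact: regularC.
move=> x; rewrite geo_skeletonE; split=> [[Sx geo_x] | [Sx avoid_x]].
  by split=> // i n [].
split=> // i n; have Sw : word_over S (factor x i n) := word_over_factor Sx.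
by case: (regular_decide geo_reg Sw) => // ngeo; case: (avoid_x i n).
Qed.
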